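(* Let $S$ be a finite-dimensional quantum system, let $\rho_0$ be a density matrix on $S$, and let $\Phi$ be a completely positive trace-preserving (CPTP) linear map on the operators of $S$ (equivalently, $\Phi(X)=\operatorname{Tr}_A[U^{SA}(X\otimes\rho^A_0)(U^{SA})^\dagger]$ for some ancilla $A$, ancilla state $\rho^A_0$ and unitary $U^{SA}$), with trace-dual $\Phi^\dagger$. Let $H_0,H_\tau$ be Hermitian operators on $S$ (initial and final Hamiltonians), $\beta>0$, and for $t\in\{0,\tau\}$ let $F_t=-\beta^{-1}\ln\operatorname{Tr}e^{-\beta H_t}$ and $\Gamma_t=\exp[\beta(F_t-H_t)]$. Put $\Delta F=F_\tau-F_0$ and $\Delta E=\operatorname{Tr}[\Phi(\rho_0)H_\tau]-\operatorname{Tr}[\rho_0H_0]$. Define the operator $L:=\ln[\Phi^\dagger(\Gamma_\tau)]-\Phi^\dagger(\ln\Gamma_\tau)$. Then $L\ge 0$ and $$\beta(\Delta E-\Delta F)+D(\rho_0\|\Gamma_0)=D(\rho_0\|\Phi^\dagger(\Gamma_\tau))+\operatorname{Tr}[\rho_0L]\ \ge\ D(\rho_0\|\Phi^\dagger(\Gamma_\tau)).$$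
   Context: The trace-dual $\Phi^\dagger$ is the linear map with $\operatorname{Tr}[\Phi(X)Y]=\operatorname{Tr}[X\Phi^\dagger(Y)]$ for all operators $X,Y$. For positive semidefinite $X\neq0$ and $Y$, $D(X\|Y):=\operatorname{Tr}[X]^{-1}\operatorname{Tr}[X\ln X-X\ln Y]$ if $\operatorname{supp}X\subseteq\operatorname{supp}Y$, and $+\infty$ otherwise (an extension of Umegaki's relative entropy; it may be negative when $\operatorname{Tr}Y\neq1$). Logarithms of positive operators are taken on their support. *)

From HB Require Import structures.
From mathcomp Require Import all_boot all_order all_algebra.
From mathcomp Require Import sesquilinear spectral.
From mathcomp Require Import complex.
From mathcomp Require Import all_classical all_reals.
From mathcomp Require Import ereal sequences.
From mathcomp.analysis Require Import exp.
Set Implicit Arguments.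
Unset Strict Implicit.
Unset Printing Implicit Defensive.
Import Order.TTheory GRing.Theory Num.Theory.
Local Open Scope ring_scope.
Local Open Scope complex_scope.

Section QDefs.
Variable R : realType.
Local Notation C := R[i].

Definition adj {m n} (A : 'M[C]_(m, n)) : 'M[C]_(n, m) := map_mx conjc (A ^T).

Definition is_herm {n} (A : 'M[C]_n) : Prop := adj A = A.

(* positive semidefinite: Hermitian and <v, A v> >= 0 for all vectors v
   (v is a row vector, so <v,Av> is  v A v^dagger). *)
Definition psd {n} (A : 'M[C]_n) : Prop :=
  is_herm A /\ forall v : 'rV[C]_n, 0 <= (v *m A *m adj v) 0 0.

Definition density {n} (A : 'M[C]_n) : Prop := psd A /\ \tr A = 1.

(* Functional calculus for Hermitian (more generally normal) matrices via the
   spectral decomposition A = P^-1 diag(d) P of mathcomp's spectral.v: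
   f(A) := P^-1 diag(f(complex.Re d_i)) P. *)
Definition mxfun {n} (f : R -> R) (A : 'M[C]_n) : 'M[C]_n :=
  invmx (spectralmx A) *m
    diag_mx (map_mx (fun z : C => (f (complex.Re z))%:C) (spectral_diag A))
  *m spectralmx A.

Definition mxexp {n} (A : 'M[C]_n) : 'M[C]_n := mxfun (@expR R) A.

(* matrix logarithm of a positive semidefinite matrix, taken on its support
   (eigenvalue 0 is mapped to 0) *)
Definition mxlog {n} (A : 'M[C]_n) : 'M[C]_n :=
  mxfun (fun x => if 0 < x then ln x else 0) A.

(* support inclusion supp X ⊆ supp Y, where supp = range (column space);
   column spaces are the row spaces of the transposes. *)
Definition supp_sub {n} (X Y : 'M[C]_n) : bool := (X^T <= Y^T)%MS.

Definition relent {n} (X Y : 'M[C]_n) : \bar R :=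
  if supp_sub X Y then
    ((complex.Re (\tr (X *m mxlog X - X *m mxlog Y))) / complex.Re (\tr X))%:E
  else +oo%E.

(* complete positivity, written as positivity of id_k (x) Phi for every k:
   a k x k block matrix (B i j)_{i,j} with n x n blocks is PSD iff
   it is block-Hermitian and sum_{i,j} v_i B_ij v_j^dagger >= 0 for all
   block row vectors (v_i). *)
Definition block_psd {n k} (B : 'I_k -> 'I_k -> 'M[C]_n) : Prop :=
  (forall i j, adj (B i j) = B j i) /\
  forall v : 'I_k -> 'rV[C]_n,
    0 <= (\sum_(i < k) \sum_(j < k) (v i *m B i j *m adj (v j)) 0 0).

Definition completely_positive {n} (Phi : 'M[C]_n -> 'M[C]_n) : Prop :=
  forall (k : nat) (B : 'I_k -> 'I_k -> 'M[C]_n),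
    block_psd B -> block_psd (fun i j => Phi (B i j)).

Definition trace_preserving {n} (Phi : 'M[C]_n -> 'M[C]_n) : Prop :=
  forall X, \tr (Phi X) = \tr X.

Definition trace_dual {n} (Phi Phid : 'M[C]_n -> 'M[C]_n) : Prop :=
  forall X Y, \tr (Phi X *m Y) = \tr (X *m Phid Y).

Definition free_energy {n} (beta : R) (H : 'M[C]_n) : R :=
  - beta^-1 * ln (complex.Re (\tr (mxexp (- (beta%:C) *: H)))).

Definition gibbs {n} (beta : R) (H : 'M[C]_n) : 'M[C]_n :=
  mxexp ((beta%:C) *: ((free_energy beta H)%:C%:M - H)).

End QDefs.

(* The identity is bookkeeping: [ln Gamma_t = beta (F_t - H_t)], and trace duality
   together with trace preservation turns [Tr[rho0 Phi^dagger(ln Gamma_tau)]] into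
   [Tr[Phi(rho0) ln Gamma_tau]]; invertibility of [Gamma_0] and [Phi^dagger(Gamma_tau)]
   makes both relative entropies finite.  The content is [L >= 0], i.e.
   [Psi(A) <= ln Psi(exp A)] for the unital positive map [Psi = Phi^dagger] and Hermitian
   [A].  Writing [ln x] as the integral over [s] in [0, 1] of
   [(x - 1) / (1 - s + s x) = s^-1 (1 - (1 - s + s x)^-1)], Riemann sums reduce this to
   the resolvent inequalities
   [<v, (1 - s + s Psi(exp A))^-1 v> <= <v, Psi((1 - s + s exp A)^-1) v>],
   which is the operator convexity of [t |-> t^-1] for the positive resolution of the
   identity formed by the images under [Psi] of the spectral projections of [A]. *)

From HB Require Import structures.
From mathcomp Require Import all_boot all_order all_algebra.
From mathcomp Require Import sesquilinear spectral.
From mathcomp Require Import complex.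
From mathcomp Require Import all_classical all_reals.
From mathcomp Require Import ereal sequences.
From mathcomp.analysis Require Import exp.
From mathcomp Require Import ring lra.
Import Order.TTheory GRing.Theory Num.Theory.
Set Implicit Arguments.
Unset Strict Implicit.
Unset Printing Implicit Defensive.
Local Open Scope ring_scope.
Local Open Scope complex_scope.
Local Open Scope sesquilinear_scope.
Local Opaque spectralmx spectral_diag.

Section LnResolvent.
Variable R : realType.

Lemma lnB_le (a b : R) : 0 < a -> 0 < b -> ln b - ln a <= (b - a) / a.
Proof.
move=> a0 b0; rewrite -ln_div ?posrE //.
have ba1 : -1 < b / a - 1 by have := divr_gt0 b0 a0; lra.
have := le_ln1Dx ba1; rewrite addrCA subrr addr0 => /le_trans; apply.
by rewrite le_eqVlt; apply/orP; left; apply/eqP; field; rewrite gt_eqF.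
Qed.

Lemma lnB_ge (a b : R) : 0 < a -> 0 < b -> (b - a) / b <= ln b - ln a.
Proof. by move=> a0 b0; rewrite -[_ - ln a]opprB -[b - a]opprB mulNr lerN2 lnB_le. Qed.

(* [ln x] is the integral over [s] in [0, 1] of [ln_kernel s x]. *)
Definition ln_kernel (s x : R) := (x - 1) / (1 - s + s * x).

Lemma ln_kernel_den_gt0 (s x : R) : 0 <= s <= 1 -> 0 < x -> 0 < 1 - s + s * x.
Proof. by move=> /andP[s0 s1] x0; have := mulr_ge0 s0 (ltW x0); nra. Qed.

Lemma ln_kernelE (s x : R) : 0 < s -> 0 < 1 - s + s * x ->
  ln_kernel s x = s^-1 * (1 - (1 - s + s * x)^-1).
Proof. by move=> s0 d0; rewrite /ln_kernel; field; rewrite !gt_eqF. Qed.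

Definition ln_riemann (N : nat) (x : R) :=
  \sum_(0 <= j < N) ln_kernel (j.+1%:R / N%:R) x / N%:R.

Lemma ln_riemann_bounds (N : nat) (x : R) : (0 < N)%N -> 0 < x ->
  ln_riemann N x <= ln x <= ln_riemann N x + (x - 1) ^+ 2 / (x * N%:R).
Proof.
move=> N0 x0; have N0r : 0 < N%:R :> R by rewrite ltr0n.
(* [ln x] telescopes along the denominators [b j] of the kernel at the nodes [j / N],
   and each increment lies between the kernel values at its two ends. *)
pose b (j : nat) : R := 1 - j%:R / N%:R + j%:R / N%:R * x.
have b_gt0 j : (j <= N)%N -> 0 < b j.
  move=> jN; apply: ln_kernel_den_gt0 => //.
  by rewrite divr_ge0 ?ler0n // ler_pdivrMr // mul1r ler_nat.
have stepE j : b j.+1 - b j = (x - 1) / N%:R.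
  by rewrite /b -natr1; field; rewrite gt_eqF.
have kernelE j : (j <= N)%N -> ln_kernel (j%:R / N%:R) x / N%:R = (x - 1) / N%:R / b j.
  move=> jN; have bj := b_gt0 _ jN.
  have NbE : N%:R - j%:R + j%:R * x = N%:R * b j by rewrite /b; field; rewrite gt_eqF.
  by rewrite /b /ln_kernel; field; rewrite NbE mulf_neq0 ?gt_eqF.
have lnE : ln x = \sum_(0 <= j < N) (ln (b j.+1) - ln (b j)).
  rewrite telescope_sumr // /b !mul0r subr0 addr0 divff ?gt_eqF //.
  by rewrite subrr add0r mul1r ln1 subr0.
apply/andP; split.
  rewrite lnE /ln_riemann !big_nat; apply: ler_sum => j /andP[_ jN].
  by rewrite kernelE // -(stepE j) (lnB_ge (b_gt0 _ (ltnW jN)) (b_gt0 _ jN)).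
have -> : ln_riemann N x + (x - 1) ^+ 2 / (x * N%:R) =
          \sum_(0 <= j < N) ln_kernel (j%:R / N%:R) x / N%:R.
  pose k j := ln_kernel (j%:R / N%:R) x / N%:R.
  have tele := telescope_sumr k (leq0n N); rewrite sumrB in tele.
  have -> : \sum_(0 <= j < N) k j = ln_riemann N x - (k N - k 0%N).
    by rewrite -tele /ln_riemann /k; ring.
  congr (_ + _); rewrite /k /ln_kernel !mul0r subr0 addr0 divr1.
  by rewrite divff ?gt_eqF // subrr add0r mul1r; field; rewrite !gt_eqF.
rewrite lnE !big_nat; apply: ler_sum => j /andP[_ jN].
by rewrite kernelE ?(ltnW jN) // -(stepE j) (lnB_le (b_gt0 _ (ltnW jN)) (b_gt0 _ jN)).
Qed.

Lemma le_of_forall_le_sub_divn (x y K : R) : 0 <= K ->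
  (forall N : nat, (0 < N)%N -> x - K / N%:R <= y) -> x <= y.
Proof.
move=> K0 hN; apply/ler_addgt0Pr => e e0.
pose N := (Num.Def.trunc (K / e)).+1.
have N0 : 0 < N%:R :> R by rewrite ltr0n.
have : K / e < N%:R by apply: truncnS_gt.
rewrite ltr_pdivrMr // -ltr_pdivrMl // => KN.
by have := hN N isT; rewrite mulrC in KN; lra.
Qed.

Lemma sum_ln_le_of_resolvent_le (I K : finType) (w m : I -> R) (q l : K -> R) :
  (forall i, 0 <= w i) -> (forall i, 0 < m i) ->
  (forall k, 0 <= q k) -> (forall k, 0 < l k) ->
  \sum_i w i = \sum_k q k ->
  (forall s, 0 < s <= 1 ->
     \sum_i w i / (1 - s + s * m i) <= \sum_k q k / (1 - s + s * l k)) ->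
  \sum_k q k * ln (l k) <= \sum_i w i * ln (m i).
Proof.
move=> w0 m0 q0 l0 sum_wq resolvent_le.
have kernel_le s : 0 < s <= 1 ->
    \sum_k q k * ln_kernel s (l k) <= \sum_i w i * ln_kernel s (m i).
  move=> /[dup] s01 /andP[s0 s1].
  have den_gt0 x : 0 < x -> 0 < 1 - s + s * x.
    by apply: ln_kernel_den_gt0; rewrite ltW.
  under eq_bigr do rewrite (ln_kernelE s0 (den_gt0 _ (l0 _))) mulrCA mulrBr mulr1.
  under [X in _ <= X]eq_bigr do
    rewrite (ln_kernelE s0 (den_gt0 _ (m0 _))) mulrCA mulrBr mulr1.
  rewrite -!mulr_sumr !sumrB sum_wq; apply: ler_wpM2l; first by rewrite invr_ge0 ltW.
  exact/lerB/resolvent_le.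
have riemann_le N : (0 < N)%N ->
    \sum_k q k * ln_riemann N (l k) <= \sum_i w i * ln_riemann N (m i).
  move=> N0; rewrite /ln_riemann.
  under eq_bigr do rewrite mulr_sumr.
  under [X in _ <= X]eq_bigr do rewrite mulr_sumr.
  rewrite [X in X <= _]exchange_big [X in _ <= X]exchange_big !big_nat.
  apply: ler_sum => j /andP[_ jN].
  under eq_bigr do rewrite mulrA.
  under [X in _ <= X]eq_bigr do rewrite mulrA.
  rewrite -!mulr_suml ler_wpM2r ?invr_ge0 ?ler0n // kernel_le //.
  by rewrite divr_gt0 ?ltr0n //= ler_pdivrMr ?ltr0n // mul1r ler_nat.
apply: (@le_of_forall_le_sub_divn _ _ (\sum_k q k * ((l k - 1) ^+ 2 / l k))).
  apply: sumr_ge0 => k _; apply: mulr_ge0 => //.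
  by apply: divr_ge0; [exact: sqr_ge0 | exact: ltW].
move=> N N0; apply: le_trans (_ : _ <= \sum_k q k * ln_riemann N (l k)) _.
  rewrite mulr_suml -sumrB; apply: ler_sum => k _.
  rewrite -mulrA -mulrBr; apply: ler_wpM2l => //.
  rewrite lerBlDr -mulrA -invfM.
  by case/andP: (ln_riemann_bounds N0 (l0 k)).
apply: le_trans (riemann_le N N0) _; apply: ler_sum => i _; apply: ler_wpM2l => //.
by case/andP: (ln_riemann_bounds N0 (m0 i)).
Qed.

End LnResolvent.

Section Spectral.
Variable R : realType.
Local Notation C := R[i].

Lemma adjE m n (A : 'M[C]_(m, n)) : adj A = A^t*.
Proof. by []. Qed.

Lemma conjcR (x : R) : (x%:C)^*%R = x%:C.
Proof. exact: conjc_real. Qed.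

Lemma Re_mul_real (a : R) (z : C) : complex.Re (a%:C * z) = a * complex.Re z.
Proof. by case: z => x y /=; rewrite mul0r subr0. Qed.

Lemma ge0_ReE (z : C) : 0 <= z -> z = (complex.Re z)%:C /\ 0 <= complex.Re z.
Proof. by case: z => a b; rewrite lecE /= => /andP[/eqP -> ->]. Qed.

Definition sqrnormc (z : C) : R := complex.Re z ^+ 2 + complex.Im z ^+ 2.

Lemma sqrnormc_ge0 (z : C) : 0 <= sqrnormc z.
Proof. by rewrite addr_ge0 // sqr_ge0. Qed.

Lemma mulcJ_sqrnormc (z : C) : z * z^* = (sqrnormc z)%:C.
Proof. by rewrite -sqr_normc -add_Re2_Im2. Qed.

Lemma trmxC_mul m n p (A : 'M[C]_(m, n)) (B : 'M[C]_(n, p)) : (A *m B)^t* = B^t* *m A^t*.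
Proof. by rewrite trmx_mul map_mxM. Qed.

Lemma unitarymx_tmul n (U : 'M[C]_n) : U \is unitarymx -> U^t* *m U = 1%:M.
Proof. by move=> Uu; rewrite -invmx_unitary // mulVmx // unitarymx_unit. Qed.

Definition rdiag_mx n (g : 'I_n -> R) : 'M[C]_n := diag_mx (\row_i (g i)%:C).

Lemma rdiag_mxM n (g h : 'I_n -> R) : rdiag_mx g *m rdiag_mx h = rdiag_mx (fun i => g i * h i).
Proof. by rewrite mulmx_diag; congr diag_mx; apply/rowP => j; rewrite !mxE rmorphM. Qed.

Lemma rdiag_mx1 n : rdiag_mx (fun _ : 'I_n => 1) = 1%:M.
Proof. by apply/matrixP => i j; rewrite !mxE. Qed.

Lemma trmxC_rdiag_mx n (g : 'I_n -> R) : (rdiag_mx g)^t* = rdiag_mx g.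
Proof.
rewrite tr_diag_mx; apply/matrixP => i j; rewrite !mxE.
by case: (i == j); rewrite ?mulr1n ?mulr0n ?conjC0 // conjcR.
Qed.

Lemma herm_rdiag_conj n (W : 'M[C]_n) g : is_herm (W^t* *m rdiag_mx g *m W).
Proof. by rewrite /is_herm adjE !trmxC_mul trmxCK trmxC_rdiag_mx mulmxA. Qed.

Lemma herm_sub n (A B : 'M[C]_n) : is_herm A -> is_herm B -> is_herm (A - B).
Proof. by rewrite /is_herm !adjE => hA hB; rewrite linearB raddfB /= hA hB. Qed.

Definition eigval n (A : 'M[C]_n) (i : 'I_n) : R := complex.Re (spectral_diag A 0 i).

Lemma herm_spectralE n (A : 'M[C]_n) : is_herm A ->
  A = (spectralmx A)^t* *m rdiag_mx (eigval A) *m spectralmx A.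
Proof.
move=> hA; have Aherm : A \is hermsymmx.
  by apply/is_hermitianmxP; rewrite expr0 scale1r; exact/esym.
have diagE : \row_i (eigval A i)%:C = spectral_diag A.
  apply/rowP => j; rewrite mxE /eigval RRe_real //.
  exact: (mxOverP (hermitian_spectral_diag_real Aherm)).
rewrite /rdiag_mx diagE -invmx_unitary ?spectral_unitarymx //.
exact/orthomx_spectralP/hermitian_normalmx.
Qed.

Lemma mxfunE n f (A : 'M[C]_n) :
  mxfun f A = (spectralmx A)^t* *m rdiag_mx (fun i => f (eigval A i)) *m spectralmx A.
Proof.
have diagE : map_mx (fun z : C => (f (complex.Re z))%:C) (spectral_diag A) =
    \row_i (f (eigval A i))%:C by apply/rowP => j; rewrite !mxE.
by rewrite /mxfun diagE invmx_unitary ?spectral_unitarymx.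
Qed.

Lemma herm_mxfun n f (A : 'M[C]_n) : is_herm (mxfun f A).
Proof. by rewrite mxfunE; apply: herm_rdiag_conj. Qed.

Lemma rdiag_mx_intertwine n (X : 'M[C]_n) (a b : 'I_n -> R) (f : R -> R) :
  X *m rdiag_mx a = rdiag_mx b *m X ->
  X *m rdiag_mx (fun i => f (a i)) = rdiag_mx (fun i => f (b i)) *m X.
Proof.
move=> /matrixP Xab; apply/matrixP => i j; have := Xab i j.
rewrite !mul_mx_diag !mul_diag_mx !mxE => e.
have [->|Xij] := eqVneq (X i j) 0; first by rewrite mulr0 mul0r.
have /complexI-> : (a j)%:C = (b i)%:C by apply: (mulfI Xij); rewrite e mulrC.
by rewrite mulrC.
Qed.

Lemma mxfun_unitary_conj n f (A W : 'M[C]_n) (g : 'I_n -> R) :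
  W \is unitarymx -> A = W^t* *m rdiag_mx g *m W ->
  mxfun f A = W^t* *m rdiag_mx (fun i => f (g i)) *m W.
Proof.
move=> Wu AE; have hA : is_herm A by rewrite AE; apply: herm_rdiag_conj.
pose V := spectralmx A; have Vu : V \is unitarymx := spectral_unitarymx A.
pose X := W *m V^t*.
have XV : X *m V = W by rewrite /X -mulmxA (unitarymx_tmul Vu) mulmx1.
have VX : V^t* = W^t* *m X by rewrite /X mulmxA (unitarymx_tmul Wu) mul1mx.
have Xa : X *m rdiag_mx (eigval A) = rdiag_mx g *m X.
  have -> : X *m rdiag_mx (eigval A) = W *m A *m V^t*.
    by rewrite {2}(herm_spectralE hA) /X !mulmxA -(mulmxA _ V) (unitarymxP Vu) mulmx1.
  by rewrite AE /X !mulmxA (unitarymxP Wu) mul1mx.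
rewrite mxfunE -/V VX -(mulmxA _ X) (rdiag_mx_intertwine f Xa) mulmxA.
by rewrite -(mulmxA _ X V) XV.
Qed.

Lemma mxlog_mxexp n (A : 'M[C]_n) : is_herm A -> mxlog (mxexp A) = A.
Proof.
move=> hA; have logexpE : (fun i => if 0 < expR (eigval A i) then ln (expR (eigval A i)) else 0)
    = eigval A by apply: funext => i; rewrite expR_gt0 expRK.
rewrite /mxlog /mxexp (mxfunE (@expR R) A).
by rewrite (mxfun_unitary_conj _ (spectral_unitarymx A) (erefl _)) logexpE -herm_spectralE.
Qed.

Lemma rdiag_conj_sum n (W : 'M[C]_n) (c : 'I_n -> R) :
  W^t* *m rdiag_mx c *m W = \sum_k (c k)%:C *: ((row k W)^t* *m row k W).
Proof.
apply/matrixP => i j; rewrite mul_mx_diag !mxE summxE.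
apply: eq_bigr => k _; rewrite !mxE big_ord1 !mxE.
by rewrite [RHS]mulrA [(c k)%:C * _]mulrC.
Qed.

Lemma rdiag_conjM n (V : 'M[C]_n) g h : V \is unitarymx ->
  (V^t* *m rdiag_mx g *m V) *m (V^t* *m rdiag_mx h *m V) =
  V^t* *m rdiag_mx (fun i => g i * h i) *m V.
Proof.
move=> Vu; rewrite !mulmxA -(mulmxA _ V) (unitarymxP Vu) mulmx1.
by rewrite -(mulmxA _ (rdiag_mx g)) rdiag_mxM.
Qed.

Lemma rdiag_conj_affine n (V : 'M[C]_n) (c d : R) g : V \is unitarymx ->
  V^t* *m rdiag_mx (fun i => c + d * g i) *m V =
  c%:C *: 1%:M + d%:C *: (V^t* *m rdiag_mx g *m V).
Proof.
move=> Vu; have -> : rdiag_mx (fun i => c + d * g i) = c%:C *: 1%:M + d%:C *: rdiag_mx g.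
  apply/matrixP => i j; rewrite !mxE.
  by case: (i == j); rewrite ?mulr1n ?mulr0n ?mulr0 ?addr0 ?mulr1 // rmorphD rmorphM.
rewrite mulmxDr mulmxDl -[V^t* *m (_ *: _)]scalemxAr -scalemxAl mulmx1.
by rewrite (unitarymx_tmul Vu) -[V^t* *m (_ *: _)]scalemxAr -scalemxAl.
Qed.

Lemma unitmx_rdiag_conj n (V : 'M[C]_n) g : V \is unitarymx -> (forall i, g i != 0) ->
  V^t* *m rdiag_mx g *m V \in unitmx.
Proof.
move=> Vu g_neq0.
apply: (proj1 (@mulmx1_unit _ _ _ (V^t* *m rdiag_mx (fun i => (g i)^-1) *m V) _)).
rewrite rdiag_conjM // (_ : (fun i => _) = fun _ => 1) ?rdiag_mx1 ?mulmx1 ?unitarymx_tmul //.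
by apply: funext => i; rewrite mulfV.
Qed.

Lemma unitmx_herm_eigval_gt0 n (A : 'M[C]_n) :
  is_herm A -> (forall i, 0 < eigval A i) -> A \in unitmx.
Proof.
move=> hA A_gt0; rewrite (herm_spectralE hA) unitmx_rdiag_conj ?spectral_unitarymx //.
by move=> i; rewrite gt_eqF.
Qed.

Lemma unitmx_mxexp n (A : 'M[C]_n) : mxexp A \in unitmx.
Proof.
rewrite /mxexp mxfunE unitmx_rdiag_conj ?spectral_unitarymx //.
by move=> i; rewrite gt_eqF // expR_gt0.
Qed.

End Spectral.

Section Forms.
Variable R : realType.
Local Notation C := R[i].

Definition mxform n (u : 'rV[C]_n) (A : 'M[C]_n) (v : 'rV[C]_n) : C :=
  (u *m A *m v^t*) 0 0.

Lemma mxformZ n (u v : 'rV[C]_n) c A : mxform u (c *: A) v = c * mxform u A v.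
Proof. by rewrite /mxform -scalemxAr -scalemxAl mxE. Qed.

Lemma mxformB n (u v : 'rV[C]_n) A B : mxform u (A - B) v = mxform u A v - mxform u B v.
Proof. by rewrite /mxform mulmxBr mulmxBl !mxE. Qed.

Lemma mxform_sum n (I : finType) (u v : 'rV[C]_n) (A : I -> 'M[C]_n) :
  mxform u (\sum_k A k) v = \sum_k mxform u (A k) v.
Proof. by rewrite /mxform mulmx_sumr mulmx_suml summxE. Qed.

Lemma mxform_subZ n (x y : 'rV[C]_n) (c : R) A :
  mxform (x - c%:C *: y) A (x - c%:C *: y) =
  mxform x A x - c%:C * mxform y A x - c%:C * mxform x A y + (c ^+ 2)%:C * mxform y A y.
Proof.
rewrite /mxform; have -> : (x - c%:C *: y)^t* = x^t* - c%:C *: y^t*.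
  by apply/matrixP => i j; rewrite !mxE rmorphB rmorphM /= conjcR.
rewrite mulmxBl mulmxBr !mulmxBl -!scalemxAl -!scalemxAr !mxE rmorphXn.
by ring.
Qed.

Lemma mxform_trace n (u : 'rV[C]_n) A : mxform u A u = \tr ((u^t* *m u) *m A).
Proof. by rewrite /mxform -trace_mx11 mxtrace_mulC mulmxA. Qed.

Lemma mxform_rdiag n (y : 'rV[C]_n) g :
  mxform y (rdiag_mx g) y = (\sum_i g i * sqrnormc (y 0 i))%:C.
Proof.
rewrite /mxform mul_mx_diag !mxE rmorph_sum; apply: eq_bigr => i _.
by rewrite !mxE -mulrA [_ * (y 0 i)^*]mulrC mulrA mulcJ_sqrnormc rmorphM mulrC.
Qed.

Lemma mxform_rdiag_conj n (u : 'rV[C]_n) (W : 'M[C]_n) g :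
  mxform u (W^t* *m rdiag_mx g *m W) u = (\sum_i g i * sqrnormc ((u *m W^t*) 0 i))%:C.
Proof. by rewrite -mxform_rdiag /mxform trmxC_mul trmxCK !mulmxA. Qed.

Lemma mxform_row_unitary n (V : 'M[C]_n) g i : V \is unitarymx ->
  mxform (row i V) (V^t* *m rdiag_mx g *m V) (row i V) = (g i)%:C.
Proof.
move=> Vu; rewrite mxform_rdiag_conj -row_mul (unitarymxP Vu).
rewrite (bigD1 i) //= big1 ?addr0 => [|j ji].
  by rewrite !mxE eqxx /sqrnormc /= expr1n expr0n /= addr0 mulr1.
by rewrite !mxE eq_sym (negbTE ji) /sqrnormc /= expr0n /= addr0 mulr0.
Qed.

Lemma psd_trace_mul_ge0 n (A B : 'M[C]_n) : psd A -> psd B -> 0 <= complex.Re (\tr (A *m B)).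
Proof.
move=> [hA A_ge0] [_ B_ge0]; set W := spectralmx A.
have Wu : W \is unitarymx by apply: spectral_unitarymx.
suff : 0 <= \tr (A *m B) by case/ge0_ReE.
rewrite (herm_spectralE hA) -!mulmxA mxtrace_mulC -!mulmxA.
apply: sumr_ge0 => i _; rewrite mul_diag_mx !mxE; apply: mulr_ge0.
  by rewrite -(mxform_row_unitary (eigval A) i Wu) -herm_spectralE //; apply: A_ge0.
have -> : \sum_j W i j * (B *m W^t*) j i = mxform (row i W) B (row i W).
  rewrite /mxform -mulmxA mxE; apply: eq_bigr => j _.
  by rewrite !mxE; congr (_ * _); apply: eq_bigr => k _; rewrite !mxE.
exact: B_ge0.
Qed.

(* Operator convexity of [t |-> t^-1]: expand
   [\sum_k mu_k^-1 <x - mu_k y, Q_k (x - mu_k y)> >= 0] with [y := x G]. *)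
Lemma mxform_inv_le n (I : finType) (x : 'rV[C]_n) (Q : I -> 'M[C]_n) (mu : I -> R)
    (G : 'M[C]_n) :
  (forall k, 0 < mu k) -> (forall k u, 0 <= mxform u (Q k) u) -> \sum_k Q k = 1%:M ->
  G^t* = G -> G *m (\sum_k (mu k)%:C *: Q k) = 1%:M ->
  mxform x G x <= \sum_k ((mu k)^-1)%:C * mxform x (Q k) x.
Proof.
move=> mu_gt0 Q_ge0 sumQ hG GE; set y := x *m G.
have yQx : \sum_k mxform y (Q k) x = mxform x G x.
  by rewrite -mxform_sum sumQ /mxform mulmx1.
have xQy : \sum_k mxform x (Q k) y = mxform x G x.
  by rewrite -mxform_sum sumQ /mxform mulmx1 /y trmxC_mul hG mulmxA.
have yQy : \sum_k (mu k)%:C * mxform y (Q k) y = mxform x G x.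
  under eq_bigr do rewrite -mxformZ.
  by rewrite -mxform_sum /mxform /y trmxC_mul hG -(mulmxA x G) GE mulmx1 mulmxA.
have expandE k : ((mu k)^-1)%:C * mxform (x - (mu k)%:C *: y) (Q k) (x - (mu k)%:C *: y) =
    ((mu k)^-1)%:C * mxform x (Q k) x - mxform y (Q k) x - mxform x (Q k) y
    + (mu k)%:C * mxform y (Q k) y.
  rewrite mxform_subZ rmorphV ?unitfE ?gt_eqF // rmorphXn; field.
  by rewrite fmorph_eq0 gt_eqF.
have : 0 <= \sum_k ((mu k)^-1)%:C * mxform (x - (mu k)%:C *: y) (Q k) (x - (mu k)%:C *: y).
  by apply: sumr_ge0 => k _; rewrite mulr_ge0 // ler0c invr_ge0 ltW.
under eq_bigr do rewrite expandE.
by rewrite !big_split /= !sumrN yQx xQy yQy subrK subr_ge0.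
Qed.

End Forms.

Section Channel.
Variable R : realType.
Local Notation C := R[i].

Lemma mxtrace_delta_mul n (A : 'M[C]_n) i j : \tr (delta_mx j i *m A) = A i j.
Proof.
rewrite -(mul_delta_mx (0 : 'I_1)) -mulmxA -rowE mxtrace_mulC trace_mx11 -colE.
by rewrite !mxE.
Qed.

Lemma mxtrace_mulr_inj n (A B : 'M[C]_n) :
  (forall X, \tr (X *m A) = \tr (X *m B)) -> A = B.
Proof. by move=> AB; apply/matrixP => i j; rewrite -!mxtrace_delta_mul AB. Qed.

Lemma mxtrace_trmxC n (A : 'M[C]_n) : \tr (A^t*) = (\tr A)^*%R.
Proof. by rewrite trace_map_mx mxtrace_tr. Qed.

Lemma mxtrace_mul_trmxC n (A B : 'M[C]_n) : \tr (A *m B^t*) = (\tr (A^t* *m B))^*%R.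
Proof. by rewrite -mxtrace_trmxC trmxC_mul trmxCK mxtrace_mulC. Qed.

Lemma trmxC_sum m p (I : finType) (F : I -> 'M[C]_(m, p)) :
  (\sum_i F i)^t* = \sum_i (F i)^t*.
Proof. by rewrite linear_sum raddf_sum. Qed.

Lemma trmxC_scale m p (c : C) (A : 'M[C]_(m, p)) : (c *: A)^t* = c^*%R *: A^t*.
Proof. by apply/matrixP => i j; rewrite !mxE rmorphM. Qed.

Lemma trmxC_delta m p (i : 'I_m) (j : 'I_p) :
  (delta_mx i j : 'M[C]_(m, p))^t* = delta_mx j i.
Proof.
apply/matrixP => a b; rewrite !mxE andbC.
by case: (_ && _); rewrite /= ?conjC1 ?conjC0.
Qed.

Definition rank1_blocks n k (x : 'I_k -> 'rV[C]_n) (a b : 'I_k) := (x a)^t* *m x b.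

Lemma rank1_block_psd n k (x : 'I_k -> 'rV[C]_n) : block_psd (rank1_blocks x).
Proof.
split=> [a b|y]; first by rewrite /rank1_blocks adjE trmxC_mul trmxCK.
pose z a := (y a *m (x a)^t*) 0 0.
have blockE a b : (y a *m rank1_blocks x a b *m adj (y b)) 0 0 = z a * (z b)^*%R.
  rewrite /rank1_blocks adjE !mulmxA -(mulmxA _ (x b)) mxE big_ord1 /z.
  by rewrite -[X in _ = _ * X^*%R]trace_mx11 -mxtrace_trmxC trmxC_mul trmxCK trace_mx11.
under eq_bigr do under eq_bigr do rewrite blockE.
under eq_bigr do rewrite -mulr_sumr.
by rewrite -mulr_suml -rmorph_sum; apply: mulcJ_ge0.
Qed.

Variable n : nat.
Variable Phi : {linear 'M[C]_n -> 'M[C]_n}.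
Variable Phid : 'M[C]_n -> 'M[C]_n.
Hypothesis Phi_cp : completely_positive Phi.
Hypothesis Phi_tp : trace_preserving Phi.
Hypothesis Phi_dual : trace_dual Phi Phid.

Lemma Phid_linear : linear Phid.
Proof.
move=> c X Y; apply: mxtrace_mulr_inj => Z.
rewrite -Phi_dual !mulmxDr -!scalemxAr !mxtraceD !mxtraceZ.
by rewrite !Phi_dual.
Qed.

Lemma Phid_unital : Phid 1%:M = 1%:M.
Proof. by apply: mxtrace_mulr_inj => X; rewrite -Phi_dual !mulmx1 Phi_tp. Qed.

Lemma Phi_rank1_trmxC (v w : 'rV[C]_n) : (Phi (v^t* *m w))^t* = Phi (w^t* *m v).
Proof.
pose x (a : 'I_2) := if a == 0 then v else w.
by have [/(_ 0 1) + _] := Phi_cp (rank1_block_psd x).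
Qed.

Lemma Phi_trmxC X : Phi (X^t*) = (Phi X)^t*.
Proof.
have deltaE (i j : 'I_n) : delta_mx i j = (delta_mx 0 i : 'rV[C]_n)^t* *m delta_mx 0 j.
  by rewrite trmxC_delta mul_delta_mx.
rewrite {1 2}(matrix_sum_delta X) trmxC_sum !(linear_sum Phi) trmxC_sum.
apply: eq_bigr => i _; rewrite trmxC_sum !(linear_sum Phi) trmxC_sum.
apply: eq_bigr => j _; rewrite (trmxC_scale (X i j)) trmxC_delta.
rewrite [Phi (_ *: _)]linearZ [Phi (_ *: _)]linearZ (trmxC_scale (X i j)) /=.
by rewrite !deltaE Phi_rank1_trmxC.
Qed.

Lemma Phid_herm Y : is_herm Y -> is_herm (Phid Y).
Proof.
rewrite /is_herm !adjE => hY; apply: mxtrace_mulr_inj => X.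
rewrite [LHS]mxtrace_mul_trmxC -[in LHS]Phi_dual Phi_trmxC -(Phi_dual X Y).
by rewrite -[in RHS]hY mxtrace_mul_trmxC.
Qed.

Lemma Phid_rank1_ge0 (x u : 'rV[C]_n) : 0 <= mxform u (Phid (x^t* *m x)) u.
Proof.
rewrite mxform_trace -Phi_dual mulmxA mxtrace_mulC mulmxA trace_mx11.
have [_ /(_ (fun=> x))] := Phi_cp (rank1_block_psd (fun _ : 'I_1 => u)).
by rewrite !big_ord1.
Qed.

End Channel.

Section UnitalPositiveMap.
Variable R : realType.
Local Notation C := R[i].
Variables (n : nat) (Psi : 'M[C]_n -> 'M[C]_n).
Hypothesis Psi_linear : linear Psi.
Hypothesis Psi_unital : Psi 1%:M = 1%:M.
Hypothesis Psi_herm : forall Y, is_herm Y -> is_herm (Psi Y).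
Hypothesis Psi_rank1_ge0 : forall x u : 'rV[C]_n, 0 <= mxform u (Psi (x^t* *m x)) u.

HB.instance Definition _ := GRing.isLinear.Build C 'M[C]_n 'M[C]_n *:%R Psi Psi_linear.

Variable A : 'M[C]_n.
Hypothesis A_herm : is_herm A.

Let W := spectralmx A.
Let a := eigval A.
Let W_unitary : W \is unitarymx. Proof. exact: spectral_unitarymx. Qed.

Let Q k := Psi ((row k W)^t* *m row k W).
Let q u k := complex.Re (mxform u (Q k) u).

Let Psi_rdiag_conj g : Psi (W^t* *m rdiag_mx g *m W) = \sum_k (g k)%:C *: Q k.
Proof. by rewrite rdiag_conj_sum linear_sum; apply: eq_bigr => k _; rewrite linearZ. Qed.

Let sum_Q : \sum_k Q k = 1%:M.
Proof.
rewrite -Psi_unital -(unitarymx_tmul W_unitary) -[W^t*]mulmx1 -rdiag_mx1.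
by rewrite Psi_rdiag_conj; under [RHS]eq_bigr do rewrite scale1r.
Qed.

Let mxform_QE u k : mxform u (Q k) u = (q u k)%:C /\ 0 <= q u k.
Proof. exact/ge0_ReE/Psi_rank1_ge0. Qed.

Let mxform_Psi_rdiag_conj u g :
  mxform u (Psi (W^t* *m rdiag_mx g *m W)) u = (\sum_k g k * q u k)%:C.
Proof.
rewrite Psi_rdiag_conj mxform_sum rmorph_sum; apply: eq_bigr => k _.
by rewrite mxformZ rmorphM; case: (mxform_QE u k) => ->.
Qed.

Let sum_q u : (\sum_k q u k)%:C = mxform u 1%:M u.
Proof.
rewrite -sum_Q mxform_sum rmorph_sum; apply: eq_bigr => k _.
by case: (mxform_QE u k).
Qed.

Let M := Psi (mxexp A).
Let V := spectralmx M.
Let V_unitary : V \is unitarymx. Proof. exact: spectral_unitarymx. Qed.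

Let expAE : mxexp A = W^t* *m rdiag_mx (fun k => expR (a k)) *m W.
Proof. exact: mxfunE. Qed.

Let M_herm : is_herm M.
Proof. by apply: Psi_herm; apply: herm_mxfun. Qed.

Let mxform_ME u : mxform u M u = (\sum_k expR (a k) * q u k)%:C.
Proof. by rewrite /M expAE mxform_Psi_rdiag_conj. Qed.

Lemma eigval_Psi_mxexp_gt0 i : 0 < eigval (Psi (mxexp A)) i.
Proof.
have := mxform_row_unitary (eigval M) i V_unitary.
rewrite -herm_spectralE // mxform_ME -/M => /complexI <-.
have := mxform_row_unitary (fun=> 1) i V_unitary.
rewrite rdiag_mx1 mulmx1 unitarymx_tmul // -sum_q => /complexI sum_q1.
have q_ge0 k : 0 <= q (row i V) k by case: (mxform_QE (row i V) k).
have sum_q_neq0 : \sum_k q (row i V) k <> 0 by apply/eqP; rewrite sum_q1 oner_neq0.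
have [k /andP[_ qk_gt0]] := psumr_neq0P (fun k _ => q_ge0 k) sum_q_neq0.
apply: lt_le_trans (mulr_gt0 (expR_gt0 (a k)) qk_gt0) _.
rewrite (bigD1 k) //= lerDl; apply: sumr_ge0 => k' _.
exact: mulr_ge0 (expR_ge0 _) (q_ge0 k').
Qed.

Let resolvent_le (v : 'rV[C]_n) s : 0 < s <= 1 ->
  \sum_i sqrnormc ((v *m V^t*) 0 i) / (1 - s + s * eigval M i) <=
  \sum_k q v k / (1 - s + s * expR (a k)).
Proof.
move=> /andP[s_gt0 s_le1]; have s01 : 0 <= s <= 1 by rewrite ltW.
pose mu k := 1 - s + s * expR (a k).
have mu_gt0 k : 0 < mu k by apply: ln_kernel_den_gt0; rewrite ?expR_gt0.
pose g i := 1 - s + s * eigval M i.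
have g_gt0 i : 0 < g i by apply: ln_kernel_den_gt0 => //; apply: eigval_Psi_mxexp_gt0.
have resolventE : \sum_k (mu k)%:C *: Q k = V^t* *m rdiag_mx g *m V.
  rewrite -Psi_rdiag_conj (rdiag_conj_affine (1 - s) s _ W_unitary) -expAE.
  rewrite linearD !linearZ /= Psi_unital -/M {1}(herm_spectralE M_herm).
  exact/esym/rdiag_conj_affine.
pose G := V^t* *m rdiag_mx (fun i => (g i)^-1) *m V.
have G_herm : G^t* = G by exact: herm_rdiag_conj.
have GE : G *m (\sum_k (mu k)%:C *: Q k) = 1%:M.
  have gVg : (fun i => (g i)^-1 * g i) = fun=> 1.
    by apply: funext => i; rewrite mulVf ?gt_eqF.
  by rewrite resolventE (rdiag_conjM _ _ V_unitary) gVg rdiag_mx1 mulmx1 unitarymx_tmul.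
have Q_ge0 k u : 0 <= mxform u (Q k) u by exact: Psi_rank1_ge0.
have := mxform_inv_le v mu_gt0 Q_ge0 sum_Q G_herm GE.
rewrite mxform_rdiag_conj.
under [X in _ <= X -> _]eq_bigr do rewrite (proj1 (mxform_QE v _)) -rmorphM.
rewrite -rmorph_sum lecR; under eq_bigr do rewrite mulrC.
by under [X in _ <= X -> _]eq_bigr do rewrite mulrC.
Qed.

Lemma psd_mxlog_Psi_mxexp_sub : psd (mxlog (Psi (mxexp A)) - Psi A).
Proof.
split; first by apply: herm_sub; [exact: herm_mxfun | exact: Psi_herm].
move=> v; change (0 <= mxform v (mxlog M - Psi A) v).
rewrite mxformB /mxlog mxfunE mxform_rdiag_conj (herm_spectralE A_herm).
rewrite mxform_Psi_rdiag_conj -rmorphB ler0c subr_ge0 -/V.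
under eq_bigr do rewrite -[eigval A _]expRK mulrC.
under [X in _ <= X]eq_bigr do rewrite eigval_Psi_mxexp_gt0 mulrC.
apply: sum_ln_le_of_resolvent_le => [i|i|k|k||s /resolvent_le //].
- exact: sqrnormc_ge0.
- exact: eigval_Psi_mxexp_gt0.
- by case: (mxform_QE v k).
- exact: expR_gt0.
apply: complexI; rewrite sum_q.
have := mxform_rdiag_conj v V (fun=> 1).
rewrite rdiag_mx1 mulmx1 unitarymx_tmul // => ->.
by congr (_%:C); apply: eq_bigr => i _; rewrite mul1r.
Qed.

End UnitalPositiveMap.

Section GibbsState.
Variable R : realType.
Local Notation C := R[i].

Lemma relent_density_unit n (X Y : 'M[C]_n) : \tr X = 1 -> Y \in unitmx ->
  relent X Y =
  (complex.Re (\tr (X *m mxlog X)) - complex.Re (\tr (X *m mxlog Y)))%:E.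
Proof.
move=> trX Y_unit; rewrite /relent /supp_sub submx_full ?row_full_unit ?unitmx_tr //.
by rewrite trX divr1 !raddfB.
Qed.

Lemma herm_gibbs_exponent n (beta f : R) (H : 'M[C]_n) : is_herm H ->
  is_herm (beta%:C *: (f%:C%:M - H)).
Proof.
rewrite /is_herm !adjE => hH; rewrite trmxC_scale linearB raddfB /= hH conjcR.
by rewrite tr_scalar_mx map_scalar_mx /= conjcR.
Qed.

Lemma mxlog_gibbs n (beta : R) (H : 'M[C]_n) : is_herm H ->
  mxlog (gibbs beta H) = beta%:C *: ((free_energy beta H)%:C%:M - H).
Proof. by move=> hH; rewrite mxlog_mxexp //; apply: herm_gibbs_exponent. Qed.

Lemma Re_trace_mul_gibbs_exponent n (X : 'M[C]_n) (beta f : R) (H : 'M[C]_n) :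
  complex.Re (\tr (X *m (beta%:C *: (f%:C%:M - H)))) =
  beta * (f * complex.Re (\tr X) - complex.Re (\tr (X *m H))).
Proof.
rewrite -scalemxAr mxtraceZ Re_mul_real mulmxBr raddfB /= mul_mx_scalar mxtraceZ.
by rewrite raddfB /= Re_mul_real.
Qed.

Lemma relent_gibbs n (X H : 'M[C]_n) (beta : R) : \tr X = 1 -> is_herm H ->
  relent X (gibbs beta H) = (complex.Re (\tr (X *m mxlog X)) -
    beta * (free_energy beta H - complex.Re (\tr (X *m H))))%:E.
Proof.
move=> trX hH; rewrite relent_density_unit ?unitmx_mxexp // mxlog_gibbs //.
by rewrite Re_trace_mul_gibbs_exponent trX mulr1.
Qed.

End GibbsState.

Local Close Scope sesquilinear_scope.

Theorem mainTheorem1 (R : realType) (n : nat)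
  (rho0 : 'M[R[i]]_n) (Phi : {linear 'M[R[i]]_n -> 'M[R[i]]_n})
  (Phid : 'M[R[i]]_n -> 'M[R[i]]_n) (H0 Htau : 'M[R[i]]_n) (beta : R) :
  density rho0 ->
  completely_positive Phi -> trace_preserving Phi ->
  trace_dual Phi Phid ->
  is_herm H0 -> is_herm Htau -> 0 < beta ->
  let F0 := free_energy beta H0 in
  let Ftau := free_energy beta Htau in
  let Gamma0 := gibbs beta H0 in
  let Gammatau := gibbs beta Htau in
  let DeltaF := Ftau - F0 in
  let DeltaE := complex.Re (\tr (Phi rho0 *m Htau)) - complex.Re (\tr (rho0 *m H0)) in
  let L := mxlog (Phid Gammatau) - Phid (mxlog Gammatau) in
  psd L /\
  ((beta * (DeltaE - DeltaF))%:E + relent rho0 Gamma0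
     = relent rho0 (Phid Gammatau) + (complex.Re (\tr (rho0 *m L)))%:E)%E /\
  (relent rho0 (Phid Gammatau) + (complex.Re (\tr (rho0 *m L)))%:E
     >= relent rho0 (Phid Gammatau))%E.
Proof.
move=> [rho_psd rho_tr] Phi_cp Phi_tp Phi_dual H0_herm Ht_herm _ F0 Ftau G0 Gt DF DE L.
have [Phid_lin Phid_1] := (Phid_linear Phi_dual, Phid_unital Phi_tp Phi_dual).
have [Phid_h Phid_ge0] := (Phid_herm Phi_cp Phi_dual, Phid_rank1_ge0 Phi_cp Phi_dual).
have At_herm := herm_gibbs_exponent beta Ftau Ht_herm.
have L_psd : psd L.
  rewrite /L /Gt /gibbs mxlog_mxexp //.
  exact: psd_mxlog_Psi_mxexp_sub Phid_lin Phid_1 Phid_h Phid_ge0 _ At_herm.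
have PhidGt_unit : Phid Gt \in unitmx.
  apply: unitmx_herm_eigval_gt0; first by apply: Phid_h; apply: herm_mxfun.
  exact: (eigval_Psi_mxexp_gt0 Phid_lin Phid_1 Phid_h Phid_ge0).
have trL : complex.Re (\tr (rho0 *m L)) = complex.Re (\tr (rho0 *m mxlog (Phid Gt))) -
    beta * (Ftau - complex.Re (\tr (Phi rho0 *m Htau))).
  rewrite /L mulmxBr !raddfB /= -Phi_dual mxlog_gibbs //.
  by rewrite Re_trace_mul_gibbs_exponent Phi_tp rho_tr mulr1.
have L_ge0 := psd_trace_mul_ge0 rho_psd L_psd.
rewrite trL in L_ge0 *; rewrite relent_gibbs // relent_density_unit //.
split=> //; split; last by rewrite -EFinD lee_fin lerDl.
(* Stated over variables: [ring] gets lost comparing the trace atoms of the goal. *)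
have balance S TP h0 hP : beta * (hP - h0 - (Ftau - F0)) + (S - beta * (F0 - h0)) =
    S - TP + (TP - beta * (Ftau - hP)) by ring.
by rewrite -!EFinD; apply/eqP; rewrite eqe /DE /DF; apply/eqP; exact: balance.
Qed.
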